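(* Let $\mathcal{S}$ be a set of states, $\mathcal{E}$ a set of events, and $\rightarrow$ a small-step transition relation $s \xrightarrow{t} s'$ on $\mathcal{S}$ labelled by finite traces $t \in \mathcal{E}^*$. Let $s \in \mathcal{S}$, let $\tau$ be a general trace (a finite or infinite sequence of events), and suppose there exists $n \in \mathbb{N}_0$ with $\mathrm{Forever}(s, \tau, n)$. Then: (1) if $\tau$ is finite, then $\mathrm{ForeverFinite}(\tau, s)$; (2) if $\tau$ is infinite, then $\mathrm{Reacts}(\tau, s)$. Moreover, if $\rightarrow$ is determinate, the converse also holds: for finite $\tau$, $\mathrm{ForeverFinite}(\tau, s)$ implies that there is an $n\in\mathbb{N}_0$ with $\mathrm{Forever}(s,\tau,n)$; and for infinite $\tau$, $\mathrm{Reacts}(\tau, s)$ implies that there is an $n\in\mathbb{N}_0$ with $\mathrm{Forever}(s,\tau,n)$.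
   Context: Traces: $\varepsilon$ denotes the empty trace and $t\cdot\tau$ denotes concatenation of a finite trace $t$ with a finite or infinite trace $\tau$. For finite traces, $s \xrightarrow{t}{}^{*} s'$ denotes the reflexive–transitive closure of the step relation: $s \xrightarrow{\varepsilon}{}^{*} s$, and if $s \xrightarrow{t_1} s_1$ and $s_1 \xrightarrow{t_2}{}^{*} s'$ then $s \xrightarrow{t_1\cdot t_2}{}^{*} s'$. The following predicates are defined coinductively (as greatest fixed points of the given rules): - Silent divergence $\mathrm{DivSilent}(s)$: if $s \xrightarrow{\varepsilon} s'$ and $\mathrm{DivSilent}(s')$ then $\mathrm{DivSilent}(s)$. - (Inductive, no recursion) Finite-trace divergence $\mathrm{ForeverFinite}(t, s)$ for finite $t$: holds iff there is $s'$ with $s \xrightarrow{t}{}^{*} s'$ and $\mathrm{DivSilent}(s')$. - Reactive divergence $\mathrm{Reacts}(\omega, s)$ for infinite $\omega$: if $s \xrightarrow{t}{}^{*} s'$, $t \neq \varepsilon$, and $\mathrm{Reacts}(\omega, s')$, then $\mathrm{Reacts}(t\cdot\omega, s)$. - General-trace divergence $\mathrm{Forever}(s, \tau, n)$ for a general (finite or infinite) trace $\tau$ and $n \in \mathbb{N}_0$: if $s \xrightarrow{t} s'$, $\mathrm{Forever}(s', \tau, m)$ for some $m\in\mathbb{N}_0$, and $\mathrm{guard}(\tau, n, t, m)$, then $\mathrm{Forever}(s, t\cdot\tau, n)$, where $\mathrm{guard}(\tau,n,t,m)$ means: $\tau = \varepsilon$, or ($t = \varepsilon$ implies $m < n$).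 Determinacy (in the sense of CompCert): the step relation is determinate if every single step $s \xrightarrow{t} s'$ has a trace $t$ of length at most one, and whenever $s \xrightarrow{t_1} s_1$ and $s \xrightarrow{t_2} s_2$ from the same state $s$, then $t_1$ and $t_2$ match (in particular $t_1 = \varepsilon$ iff $t_2 = \varepsilon$), and $t_1 = t_2$ implies $s_1 = s_2$. *)

From Stdlib Require Import List Arith.
Import ListNotations.
Set Implicit Arguments.

Section Traces.
Variable S E : Type.
Variable step : S -> list E -> S -> Prop.

CoInductive gtrace : Type :=
| gnil : gtrace
| gcons : E -> gtrace -> gtrace.

Definition gapp (t : list E) (tau : gtrace) : gtrace := fold_right gcons tau t.

Definition gof_list (t : list E) : gtrace := gapp t gnil.

CoInductive ginfinite : gtrace -> Prop :=
| ginfinite_cons : forall e tau, ginfinite tau -> ginfinite (gcons e tau).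

Inductive star : S -> list E -> S -> Prop :=
| star_refl : forall s, star s [] s
| star_step : forall s t1 s1 t2 s',
    step s t1 s1 -> star s1 t2 s' -> star s (t1 ++ t2) s'.

CoInductive DivSilent : S -> Prop :=
| divsilent_intro : forall s s', step s [] s' -> DivSilent s' -> DivSilent s.

Definition ForeverFinite (t : list E) (s : S) : Prop :=
  exists s', star s t s' /\ DivSilent s'.

CoInductive Reacts : gtrace -> S -> Prop :=
| reacts_intro : forall s t s' omega,
    star s t s' -> t <> [] -> Reacts omega s' -> Reacts (gapp t omega) s.

Definition guard (tau : gtrace) (n : nat) (t : list E) (m : nat) : Prop :=
  tau = gnil \/ (t = [] -> m < n).

CoInductive Forever : S -> gtrace -> nat -> Prop :=
| forever_intro : forall s t s' tau n m,
    step s t s' -> Forever s' tau m -> guard tau n t m ->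
    Forever s (gapp t tau) n.

(* Determinacy: traces of single steps have length <= 1; two steps from the
   same state have traces that "match" (here: the minimal matching condition
   t1 = [] <-> t2 = []), and equal traces lead to equal states. *)
Definition determinate : Prop :=
  (forall s t s', step s t s' -> length t <= 1) /\
  (forall s t1 s1 t2 s2, step s t1 s1 -> step s t2 s2 ->
     (t1 = [] <-> t2 = []) /\ (t1 = t2 -> s1 = s2)).

End Traces.

Arguments gnil {E}.

(* The index of [Forever] bounds the number of silent steps before the next
   event, except once the remaining trace is empty, where silent steps are
   unrestricted.  By well-founded induction on the index, a [Forever]
   derivation on a nonempty trace therefore yields a finite run emitting a
   nonempty prefix of the trace, followed by a [Forever] derivation on the
   rest.  Iterating this coinductively gives [Reacts]; on a finite trace the
   events run out and what remains is silent divergence.  Conversely, a valid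
   index is the number of steps of the run leading to the next event. *)

From Stdlib Require Import List Arith Lia.
Import ListNotations.

Set Implicit Arguments.

Section TraceLemmas.
Variable E : Type.

Lemma gapp_app (t1 t2 : list E) tau : gapp (t1 ++ t2) tau = gapp t1 (gapp t2 tau).
Proof. apply fold_right_app. Qed.

Lemma gapp_gof_list_inv (t1 t : list E) tau :
  gapp t1 tau = gof_list t -> exists t2, t = t1 ++ t2 /\ tau = gof_list t2.
Proof.
  revert t; induction t1 as [|e t1 IH]; intros t H.
  - exists t; auto.
  - destruct t as [|e' t]; [discriminate|].
    injection H as -> H.
    destruct (IH t H) as [t2 [-> ->]].
    exists t2; auto.
Qed.

Lemma ginfinite_gapp (t : list E) tau : ginfinite (gapp t tau) -> ginfinite tau.
Proof. induction t as [|e t IH]; intro H; [exact H|]. inversion H; auto. Qed.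

End TraceLemmas.

Section Divergence.
Variables (S E : Type) (step : S -> list E -> S -> Prop).

Lemma star_one s t s' : step s t s' -> star step s t s'.
Proof. intro H. rewrite <- (app_nil_r t). econstructor; [exact H | constructor]. Qed.

Lemma star_trans s t1 s1 t2 s2 :
  star step s t1 s1 -> star step s1 t2 s2 -> star step s (t1 ++ t2) s2.
Proof.
  induction 1 as [|s0 u1 s0' u2 s0'' Hstep _ IH]; intro H2; [exact H2|].
  rewrite <- app_assoc. exact (star_step _ _ Hstep (IH H2)).
Qed.

Inductive starN : nat -> S -> list E -> S -> Prop :=
| starN_refl : forall s, starN 0 s [] s
| starN_step : forall k s t1 s1 t2 s',
    step s t1 s1 -> starN k s1 t2 s' -> starN (Datatypes.S k) s (t1 ++ t2) s'.

Lemma star_starN s t s' : star step s t s' -> exists k, starN k s t s'.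
Proof.
  induction 1 as [s|s t1 s1 t2 s' Hstep _ [k Hk]].
  - exists 0; constructor.
  - exists (Datatypes.S k); econstructor; eauto.
Qed.

Lemma starN_star k s t s' : starN k s t s' -> star step s t s'.
Proof. induction 1; econstructor; eauto. Qed.

Lemma Forever_progress n s tau : Forever step s tau n -> tau <> gnil ->
  exists t s' tau' m, star step s t s' /\ t <> [] /\ tau = gapp t tau' /\
    Forever step s' tau' m.
Proof.
  revert s tau; induction n as [n IH] using lt_wf_ind.
  intros s tau H Hne.
  destruct H as [s t1 s1 tau1 n m Hstep HF Hguard].
  destruct t1 as [|e t1].
  - destruct Hguard as [-> | Hlt]; [contradiction|].
    destruct (IH m (Hlt eq_refl) s1 tau1 HF Hne)
      as [t [s' [tau' [m' [Hstar [Ht [-> HF']]]]]]].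
    exists t, s', tau', m'; repeat split; auto.
    exact (star_step _ [] Hstep Hstar).
  - exists (e :: t1), s1, tau1, m; repeat split; auto using star_one.
    discriminate.
Qed.

Lemma Forever_gnil_inv s n : Forever step s gnil n ->
  exists s' m, step s [] s' /\ Forever step s' gnil m.
Proof.
  intro H. remember gnil as tau0 eqn:Heq.
  destruct H as [s t s' tau n m Hstep HF _].
  destruct t; [|discriminate]. simpl in Heq; subst tau.
  eauto.
Qed.

CoFixpoint Forever_gnil_DivSilent s n : Forever step s gnil n -> DivSilent step s.
Proof.
  intro H. destruct (Forever_gnil_inv H) as [s' [m [Hstep HF]]].
  exact (divsilent_intro _ Hstep (Forever_gnil_DivSilent _ _ HF)).
Qed.

Lemma Forever_ForeverFinite t s n :
  Forever step s (gof_list t) n -> ForeverFinite step t s.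
Proof.
  revert s n; induction t as [t IH] using (Wf_nat.induction_ltof1 _ (@length E)).
  intros s n H.
  destruct t as [|e t0].
  - exists s; split; [constructor | exact (Forever_gnil_DivSilent H)].
  - destruct (Forever_progress H ltac:(discriminate))
      as [t1 [s1 [tau1 [m [Hstar [Ht1 [Heq HF]]]]]]].
    destruct (gapp_gof_list_inv _ _ _ (eq_sym Heq)) as [t2 [Ht ->]].
    assert (Hlen : length t2 < length (e :: t0)).
    { rewrite Ht, length_app. destruct t1; [contradiction|]. simpl; lia. }
    destruct (IH t2 Hlen s1 m HF) as [s2 [Hstar2 Hdiv]].
    exists s2; split; [rewrite Ht; exact (star_trans Hstar Hstar2) | exact Hdiv].
Qed.

CoFixpoint Forever_Reacts s tau n :
  Forever step s tau n -> ginfinite tau -> Reacts step tau s.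
Proof.
  intros H Hinf.
  destruct (Forever_progress H ltac:(intros ->; inversion Hinf))
    as [t [s' [tau' [m [Hstar [Ht [-> HF]]]]]]].
  exact (reacts_intro Hstar Ht (Forever_Reacts _ _ _ HF (ginfinite_gapp _ _ Hinf))).
Qed.

CoFixpoint DivSilent_Forever s : DivSilent step s -> Forever step s gnil 0.
Proof.
  intro H. destruct H as [s s' Hstep Hdiv].
  exact (forever_intro (t := []) _ Hstep (DivSilent_Forever _ Hdiv) (or_introl eq_refl)).
Qed.

Lemma star_Forever s t s' tau m : star step s t s' -> Forever step s' tau m ->
  exists n, Forever step s (gapp t tau) n.
Proof.
  induction 1 as [s|s t1 s1 t2 s' Hstep _ IH]; intro HF; [eauto|].
  destruct (IH HF) as [n Hn].
  exists (Datatypes.S n). rewrite gapp_app.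
  exact (forever_intro _ Hstep Hn (or_intror (fun _ => Nat.lt_succ_diag_r n))).
Qed.

Lemma ForeverFinite_Forever t s :
  ForeverFinite step t s -> exists n, Forever step s (gof_list t) n.
Proof.
  intros [s' [Hstar Hdiv]].
  exact (star_Forever Hstar (DivSilent_Forever Hdiv)).
Qed.

Lemma Reacts_star s t s' tau :
  star step s t s' -> Reacts step tau s' -> Reacts step (gapp t tau) s.
Proof.
  intros Hstar HR. destruct HR as [s' t' s'' tau' Hstar' Ht' HR'].
  rewrite <- gapp_app.
  apply (reacts_intro (star_trans Hstar Hstar')); [|exact HR'].
  intro Hnil; apply Ht'; destruct (app_eq_nil _ _ Hnil); assumption.
Qed.

Lemma Reacts_inv_starN tau s : Reacts step tau s ->
  exists k t s' tau', starN k s t s' /\ t <> [] /\ Reacts step tau' s' /\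
    tau = gapp t tau'.
Proof.
  intro H. destruct H as [s t s' tau' Hstar Ht HR].
  destruct (star_starN Hstar) as [k Hk].
  exists k, t, s', tau'; auto.
Qed.

CoFixpoint starN_Reacts_Forever k s t s' tau :
  starN k s t s' -> t <> [] -> Reacts step tau s' -> Forever step s (gapp t tau) k.
Proof.
  intros Hk Ht HR.
  destruct Hk as [s|k s t1 s1 t2 s' Hstep Hk]; [contradiction|].
  rewrite gapp_app.
  destruct t1 as [|e t1].
  - apply (forever_intro (m := k) _ Hstep).
    + exact (starN_Reacts_Forever _ _ _ _ _ Hk Ht HR).
    + right; intros _; apply Nat.lt_succ_diag_r.
  - destruct (Reacts_inv_starN (Reacts_star (starN_star Hk) HR))
      as [k' [t' [s'' [tau' [Hk' [Ht' [HR' Heq]]]]]]].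
    rewrite Heq.
    apply (forever_intro (m := k') _ Hstep).
    + exact (starN_Reacts_Forever _ _ _ _ _ Hk' Ht' HR').
    + right; discriminate.
Qed.

Lemma Reacts_Forever tau s : Reacts step tau s -> exists n, Forever step s tau n.
Proof.
  intro H.
  destruct (Reacts_inv_starN H) as [k [t [s' [tau' [Hk [Ht [HR ->]]]]]]].
  exists k; exact (starN_Reacts_Forever Hk Ht HR).
Qed.

End Divergence.

(* The guard of [Forever] only constrains its index, and a suitable index can
   always be read off the run to the next event. *)
Theorem mainTheorem1 (S E : Type) (step : S -> list E -> S -> Prop)
    (s : S) (tau : gtrace E) :
  ((exists n, Forever step s tau n) ->
     (forall t : list E, tau = gof_list t -> ForeverFinite step t s) /\
     (ginfinite tau -> Reacts step tau s)) /\
  (determinate step ->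
     (forall t : list E, tau = gof_list t ->
        ForeverFinite step t s -> exists n, Forever step s tau n) /\
     (ginfinite tau -> Reacts step tau s -> exists n, Forever step s tau n)).
Proof.
  split.
  - intros [n H]; split.
    + intros t ->; exact (Forever_ForeverFinite _ H).
    + exact (Forever_Reacts H).
  - intros _; split.
    + intros t ->; apply ForeverFinite_Forever.
    + intros _; apply Reacts_Forever.
Qed.
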